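(* The map $f$ defined below is a bijection from $\mathcal{G}_2$ onto $\mathcal{A}_2$, and $f(\pi)$ is a partition of the same integer as $\pi$.
   Context: Partitions are nonincreasing finite sequences of positive integers; $m_j(\pi)$ is the multiplicity of $j$ in $\pi$, $\ell(\pi)$ the number of parts, and $\pi\cup\lambda$ the partition formed by all parts of both (as a multiset). $\langle a^{m}\rangle$ denotes the partition consisting of $m$ copies of $a$. $\mathcal{G}_2$ is the set of partitions $\pi$ with $m_1(\pi)\le 1$ and $m_j(\pi)+m_{j+1}(\pi)\le 2$ for all $j\ge1$. For $\pi\in\mathcal{G}_2$ every part has multiplicity at most $2$. Let $D(\pi)$ be the number of distinct parts of multiplicity $2$, let $R_1(\pi)>R_2(\pi)>\dots>R_{D(\pi)}(\pi)$ be these parts, and set $R_{D(\pi)+1}(\pi)=0$, $R_0(\pi)=\infty$. For $0\le k\le D(\pi)$ let $\pi^{(k)}$ be the partition consisting of the parts of $\pi$ strictly between $R_{k+1}(\pi)$ and $R_k(\pi)$ (these parts are distinct). For a partition $\mu$ and integer $c$, $\mu+\langle c^{\ell(\mu)}\rangle$ denotes $\mu$ with $c$ added to each part. Define $$f(\pi)=\bigcup_{i=1}^{D(\pi)}\big\langle (2i)^{R_i(\pi)-R_{i+1}(\pi)-\ell(\pi^{(i)})}\big\rangle\ \cup\ \bigcup_{i=0}^{D(\pi)}\Big(\pi^{(i)}+\langle (2i)^{\ell(\pi^{(i)})}\rangle\Big).$$ For a partition $\lambda$, $R_1(\lambda)$ is its largest part of multiplicity $\ge2$ (or $0$ if none).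 $\mathcal{A}_2$ is the set of partitions $\lambda$ such that $m_j(\lambda)\le1$ for odd $j$, $m_j(\lambda)=0$ for odd $j<R_1(\lambda)$, and $m_j(\lambda)\ge 2$ for even $j$ with $0<j<R_1(\lambda)$. *)

From mathcomp Require Import all_boot.
Set Implicit Arguments. Unset Strict Implicit. Unset Printing Implicit Defensive.

Definition is_partition (s : seq nat) : bool :=
  sorted geq s && all (fun x => 0 < x) s.

Definition mult (j : nat) (s : seq nat) : nat := count_mem j s.

Definition G2 (p : seq nat) : Prop :=
  is_partition p /\ mult 1 p <= 1 /\
  (forall j, 1 <= j -> mult j p + mult j.+1 p <= 2).

(* R_1 > R_2 > ... > R_D : distinct parts of multiplicity 2 (decreasing) *)
Definition reps (p : seq nat) : seq nat :=
  undup [seq x <- p | mult x p == 2].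

Definition D (p : seq nat) : nat := size (reps p).

(* R_i for i >= 1 ; R_{D+1} = 0 via the default of nth *)
Definition R (p : seq nat) (i : nat) : nat := nth 0 (reps p) i.-1.

(* pi^(k): parts strictly between R_{k+1} and R_k  (R_0 = infinity) *)
Definition pik (p : seq nat) (k : nat) : seq nat :=
  [seq x <- p | (R p k.+1 < x) && ((k == 0) || (x < R p k))].

(* the map f; the multiset union is returned as a nonincreasing sequence *)
Definition f (p : seq nat) : seq nat :=
  sort geq
    (flatten [seq nseq (R p i - R p i.+1 - size (pik p i)) (2 * i) | i <- iota 1 (D p)]
     ++ flatten [seq map (addn (2 * i)) (pik p i) | i <- iota 0 (D p).+1]).

Definition R1 (l : seq nat) : nat :=
  foldr maxn 0 [seq x <- l | 2 <= mult x l].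

Definition A2 (l : seq nat) : Prop :=
  is_partition l /\
  (forall j, odd j -> mult j l <= 1) /\
  (forall j, odd j -> j < R1 l -> mult j l = 0) /\
  (forall j, ~~ odd j -> 0 < j -> j < R1 l -> 2 <= mult j l).

From mathcomp Require Import all_boot zify.

(* A partition in G_2 is empty, or its largest part a is simple and the other
   parts form a partition in G_2 below a, or its largest part b occurs exactly
   twice and the other parts form a partition in G_2 bounded by b - 2.  Along
   this decomposition
     f (a :: p) = a :: f p   and   f (b :: b :: p) = (f p + 2) U <2^(b - l(f p))>,
   so f is computed recursively, and each step visibly preserves the weight and
   the conditions defining A_2.  Conversely, the first step can be read off
   lambda = f p: the largest part of p is simple exactly when lambda has
   distinct parts or fewer than lambda_1 parts.  Hence the recursion can be
   undone step by step, which gives injectivity and, by induction on the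
   length, surjectivity. *)

Lemma geq_trans : transitive geq.
Proof. by move=> y x z /= yx zy; exact: leq_trans zy yx. Qed.

Lemma geq_anti : antisymmetric geq.
Proof. by move=> x y; rewrite andbC; exact: anti_leq. Qed.

Lemma mult_cons j a s : mult j (a :: s) = (a == j) + mult j s.
Proof. by rewrite /mult /= eq_sym. Qed.

Lemma mult0 j s : j \notin s -> mult j s = 0.
Proof. exact: count_memPn. Qed.

Lemma mult_gt0 j s : (0 < mult j s) = (j \in s).
Proof. by rewrite /mult -has_pred1 has_count. Qed.

Lemma all_ltn_notin a s : all (fun x => x < a) s -> a \notin s.
Proof. by move=> lt_s_a; apply/negP => /(allP lt_s_a); rewrite ltnn. Qed.

Lemma mult_all_ltn j a s : all (fun x => x < a) s -> a <= j -> mult j s = 0.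
Proof. by move=> lt_s_a le_aj; apply/mult0/negP => /(allP lt_s_a) /=; lia. Qed.

Lemma all_ltn_pair {b p} : all (fun x => x.+2 <= b) p -> all (fun x => x < b) p.
Proof. by apply: sub_all => x /ltnW. Qed.

Lemma all_head (P : pred nat) s : P 0 -> all P s -> P (head 0 s).
Proof. by case: s => //= x s _ /andP[]. Qed.

Lemma part_cons a p :
  is_partition (a :: p) = [&& all (fun x => x <= a) p, 0 < a & is_partition p].
Proof.
rewrite /is_partition /= (path_sortedE geq_trans).
by case: (all _ p); case: (0 < a); case: (sorted _ _).
Qed.

Lemma part_head p : is_partition p -> all (fun x => x <= head 0 p) p.
Proof. by case: p => //= a p; rewrite part_cons leqnn => /andP[]. Qed.

(** * Removing the largest parts *)

Definition f_parts (p : seq nat) : seq nat :=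
  flatten [seq nseq (R p i - R p i.+1 - size (pik p i)) (2 * i) | i <- iota 1 (D p)]
  ++ flatten [seq map (addn (2 * i)) (pik p i) | i <- iota 0 (D p).+1].

Lemma perm_f_parts p : perm_eq (f p) (f_parts p).
Proof. by rewrite /f perm_sort. Qed.

(* For [p] in [G_2] the multiplicities of the parts [2 i] of [f p] telescope,
   so that [f p] has [R_1 + l(pi^(0))] parts. *)
Definition nparts (p : seq nat) : nat := R p 1 + size (pik p 0).

Lemma reps_cons_max a p : a \notin p -> reps (a :: p) = reps p.
Proof.
move=> a_notin_p; rewrite /reps /= eqxx mult0 //=.
congr undup; apply: eq_in_filter => x x_in_p.
by have /negbTE -> : a != x by apply: contraNneq a_notin_p => ->.
Qed.

Lemma reps_cons_pair b p : b \notin p -> reps (b :: b :: p) = b :: reps p.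
Proof.
move=> b_notin_p; rewrite /reps /= eqxx mult0 //= inE eqxx /=.
rewrite (@eq_in_filter _ _ (fun x => mult x p == 2)); last first.
  by move=> x x_in_p; have /negbTE -> : b != x by apply: contraNneq b_notin_p => ->.
by rewrite mem_filter (negbTE b_notin_p) andbF.
Qed.

Lemma R_ltn a p k : 0 < a -> all (fun x => x < a) p -> R p k < a.
Proof.
move=> a_gt0 /allP lt_p_a; rewrite /R.
case: (ltnP k.-1 (size (reps p))) => [k_lt | k_ge]; last by rewrite nth_default.
by apply/lt_p_a; move: (mem_nth 0 k_lt); rewrite mem_undup mem_filter => /andP[].
Qed.

Section ConsMax.

Variables (a : nat) (p : seq nat).
Hypotheses (a_gt0 : 0 < a) (p_lt_a : all (fun x => x < a) p).

Lemma R_cons_max k : R (a :: p) k = R p k.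
Proof. by rewrite /R reps_cons_max // all_ltn_notin. Qed.

Lemma D_cons_max : D (a :: p) = D p.
Proof. by rewrite /D reps_cons_max // all_ltn_notin. Qed.

Lemma pik_cons_max k : pik (a :: p) k = if k is 0 then a :: pik p 0 else pik p k.
Proof.
rewrite /pik /= !R_cons_max (R_ltn _ _ _ a_gt0 p_lt_a); case: k => //= k.
by rewrite ltnNge ltnW ?andbF // R_ltn.
Qed.

Lemma nparts_cons_max : nparts (a :: p) = (nparts p).+1.
Proof. by rewrite /nparts pik_cons_max R_cons_max addnS. Qed.

Lemma perm_f_cons_max : perm_eq (f (a :: p)) (a :: f p).
Proof.
apply: perm_trans (perm_f_parts _) _.
apply: (@perm_trans _ (a :: f_parts p)); last by rewrite perm_cons perm_sym perm_f_parts.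
have pik_tail (F : nat -> seq nat -> seq nat) :
    [seq F i (pik (a :: p) i) | i <- iota 1 (D p)] = [seq F i (pik p i) | i <- iota 1 (D p)].
  by apply/eq_in_map => -[|i]; rewrite ?mem_iota // pik_cons_max.
rewrite /f_parts D_cons_max /= pik_cons_max /=.
under eq_map do rewrite !R_cons_max.
rewrite (pik_tail (fun i s => nseq (R p i - R p i.+1 - size s) (2 * i))).
rewrite (pik_tail (fun i s => map (addn (2 * i)) s)).
by rewrite -cat1s perm_catCA.
Qed.

End ConsMax.

Section ConsPair.

Variables (b : nat) (p : seq nat).
Hypotheses (b_gt0 : 0 < b) (p_lt_b : all (fun x => x < b) p).

Lemma R_cons_pair k : R (b :: b :: p) k.+1 = if k is 0 then b else R p k.
Proof. by rewrite /R reps_cons_pair ?all_ltn_notin //; case: k. Qed.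

Lemma D_cons_pair : D (b :: b :: p) = (D p).+1.
Proof. by rewrite /D reps_cons_pair ?all_ltn_notin. Qed.

Lemma pik_cons_pair k : pik (b :: b :: p) k = if k is k'.+1 then pik p k' else [::].
Proof.
rewrite /pik /=; case: k => [|[|k]]; rewrite !R_cons_pair ?ltnn /=.
- rewrite (@eq_in_filter _ _ pred0) ?filter_pred0 // => x /(allP p_lt_b) /= x_lt_b.
  by rewrite ltnNge ltnW.
- by rewrite andbF; apply: eq_in_filter => x /(allP p_lt_b) ->.
- have /negbTE -> : ~~ (b < R p k.+1) by rewrite -leqNgt ltnW // R_ltn.
  by rewrite andbF.
Qed.

Lemma nparts_cons_pair : nparts (b :: b :: p) = b.
Proof. by rewrite /nparts pik_cons_pair R_cons_pair addn0. Qed.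

Lemma f_parts_cons_pair :
  f_parts (b :: b :: p) = nseq (b - nparts p) 2 ++ map (addn 2) (f_parts p).
Proof.
have iota_succ m n : iota m.+1 n = map S (iota m n) by rewrite -add1n iotaDl.
rewrite /f_parts D_cons_pair /= [iota 2 _]iota_succ !pik_cons_pair !R_cons_pair.
rewrite /nparts subnDA -!catA; congr (_ ++ _).
rewrite !map_cat !map_flatten -!map_comp.
congr (flatten _ ++ _ ++ flatten _).
- apply/eq_in_map => -[|i]; rewrite ?mem_iota //= => _.
  by rewrite map_nseq pik_cons_pair !R_cons_pair mulnS.
- apply: eq_map => i /=; rewrite pik_cons_pair -map_comp.
  by apply: eq_map => x /=; rewrite mulnS; lia.
Qed.

Lemma perm_f_cons_pair :
  perm_eq (f (b :: b :: p)) (nseq (b - nparts p) 2 ++ map (addn 2) (f p)).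
Proof.
apply: perm_trans (perm_f_parts _) _; rewrite f_parts_cons_pair perm_cat2l.
by apply: perm_map; rewrite perm_sym perm_f_parts.
Qed.

End ConsPair.

(** * The structure of [G_2] *)

Lemma G2_behead {a p} : G2 (a :: p) -> G2 p.
Proof.
move=> [part_ap [mult1 mult_adj]]; split; first by move: part_ap; rewrite part_cons => /and3P[].
split; first by move: mult1; rewrite mult_cons; lia.
by move=> j j_gt0; have := mult_adj j j_gt0; rewrite !mult_cons; lia.
Qed.

Lemma G2_nil : G2 [::].
Proof. by split => //; split => // j; rewrite /mult. Qed.

Variant G2_spec : seq nat -> Prop :=
| G2SpecNil : G2_spec [::]
| G2SpecMax a p of G2 (a :: p) & 0 < a & all (fun x => x < a) p : G2_spec (a :: p)
| G2SpecPair b p of G2 p & 2 <= b & all (fun x => x.+2 <= b) p : G2_spec (b :: b :: p).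

Lemma G2P p : G2 p -> G2_spec p.
Proof.
case: p => [|a p] G2ap; first exact: G2SpecNil.
have [part_ap [mult1 mult_adj]] := G2ap.
move: (part_ap); rewrite part_cons => /and3P[le_p_a a_gt0 part_p].
have [a_in_p | a_notin_p] := boolP (a \in p); last first.
  apply: G2SpecMax => //; apply/allP => x x_in_p.
  by rewrite ltn_neqAle (allP le_p_a x x_in_p) andbT; apply: contraNneq a_notin_p => <-.
case: p => [//|c p] in G2ap part_ap a_in_p le_p_a part_p mult1 mult_adj *.
have c_eq_a : c = a.
  by apply/eqP; rewrite eqn_leq (allP le_p_a) ?mem_head // (allP (part_head _ part_p)).
subst c; have a_notin_p : a \notin p.
  by rewrite -mult_gt0; have := mult_adj a a_gt0; rewrite !mult_cons eqxx; lia.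
have a_ge2 : 2 <= a by move: mult1; rewrite !mult_cons; case: (a) a_gt0 => [|[|]].
have mult_pred : mult a.-1 (a :: a :: p) + mult a (a :: a :: p) <= 2.
  by have := mult_adj a.-1; rewrite prednK //; apply; lia.
apply: G2SpecPair (G2_behead (G2_behead G2ap)) a_ge2 _; apply/allP => x x_in_p.
have x_le_a : x <= a by apply: (allP le_p_a); rewrite inE x_in_p orbT.
have x_neq_a : x != a by apply: contraNneq a_notin_p => <-.
have : x != a.-1.
  apply/negP => /eqP x_eq; move: mult_pred; rewrite !mult_cons eqxx -x_eq.
  by have := mult_gt0 x p; rewrite x_in_p; lia.
lia.
Qed.

Lemma G2_cons_max a p :
  G2 p -> 0 < a -> all (fun x => x < a) p -> mult a.-1 p <= 1 -> G2 (a :: p).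
Proof.
move=> [part_p [mult1 mult_adj]] a_gt0 p_lt_a mult_pred.
have mult_ge j : a <= j -> mult j p = 0 by apply: mult_all_ltn.
split.
  by rewrite part_cons; apply/and3P; split => //; apply/allP => x /(allP p_lt_a) /ltnW.
split; first by rewrite mult_cons; case: eqP => [a_eq1|_] //; rewrite mult_ge ?a_eq1.
move=> j j_gt0; rewrite !mult_cons.
case: (ltngtP a j) => [a_lt_j | j_lt_a | <-]; last by rewrite !mult_ge //; lia.
  by rewrite !mult_ge //; lia.
case: (eqVneq a j.+1) => [a_eq | _]; last exact: mult_adj.
by move: mult_pred; rewrite a_eq /= (mult_ge j.+1) ?a_eq //; lia.
Qed.

Lemma G2_cons_pair b p : G2 p -> 2 <= b -> all (fun x => x.+2 <= b) p -> G2 (b :: b :: p).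
Proof.
move=> [part_p [mult1 mult_adj]] b_ge2 p_le_b.
have mult_ge j : b.-1 <= j -> mult j p = 0.
  by apply: mult_all_ltn; apply/allP => x /(allP p_le_b) /=; lia.
split.
  have p_le_b' : all (fun x => x <= b) p by apply/allP => x /(allP p_le_b) /=; lia.
  by rewrite !part_cons /= leqnn p_le_b' part_p (ltnW b_ge2).
split; first by rewrite !mult_cons; have /negbTE -> : b != 1 by lia.
move=> j j_gt0; rewrite !mult_cons.
case: (eqVneq b j) => [<- | b_neq_j]; first by rewrite !mult_ge //; lia.
case: (eqVneq b j.+1) => [b_eq | _]; first by rewrite !mult_ge //=; lia.
by rewrite /= !add0n; exact: mult_adj.
Qed.

Lemma G2_ind (P : seq nat -> Prop) :
  P [::] ->
  (forall a p, G2 (a :: p) -> 0 < a -> all (fun x => x < a) p -> P p -> P (a :: p)) ->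
  (forall b p, G2 p -> 2 <= b -> all (fun x => x.+2 <= b) p -> P p -> P (b :: b :: p)) ->
  forall p, G2 p -> P p.
Proof.
move=> P_nil P_max P_pair p; have [n] := ubnP (size p); elim: n p => // n IH p size_p G2p.
case/G2P: G2p size_p => [|a q G2aq a_gt0 q_lt_a|b q G2q b_ge2 q_le_b] /= size_q //.
  by apply: P_max => //; apply: IH (G2_behead G2aq); lia.
by apply: P_pair => //; apply: IH G2q; lia.
Qed.

Lemma f_nil : f [::] = [::].
Proof. by []. Qed.

Lemma sorted_f p : sorted geq (f p).
Proof. by apply: sort_sorted => x y; exact: leq_total. Qed.

Lemma nparts_le_head p : G2 p -> nparts p <= head 0 p.
Proof.
move: p; apply: G2_ind => [|a p _ a_gt0 p_lt_a IH|b p _ b_ge2 p_le_b _] //=.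
  rewrite nparts_cons_max //; apply: leq_ltn_trans IH _.
  exact: (all_head (fun x => x < a)).
by rewrite nparts_cons_pair ?all_ltn_pair //; lia.
Qed.

Lemma f_bounds p : G2 p -> all (fun x => 0 < x <= head 0 p) (f p).
Proof.
move: p; apply: G2_ind => [|a p _ a_gt0 p_lt_a IH|b p _ b_ge2 p_le_b IH].
- by rewrite f_nil.
- have p_head : head 0 p < a by exact: (all_head (fun x => x < a)).
  rewrite (perm_all _ (perm_f_cons_max _ _ a_gt0 p_lt_a)) /= a_gt0 leqnn /=.
  by apply/allP => x /(allP IH) /andP[-> x_le]; exact: leq_trans x_le (ltnW p_head).
- have p_lt_b := all_ltn_pair p_le_b.
  have p_head : (head 0 p).+2 <= b by exact: (all_head (fun x => x.+2 <= b) _ b_ge2 p_le_b).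
  rewrite (perm_all _ (perm_f_cons_pair _ _ _ p_lt_b)) ?all_cat; last lia.
  apply/andP; split; first by apply/allP => x; rewrite mem_nseq => /andP[_ /eqP ->] /=; lia.
  by rewrite all_map; apply/allP => x /(allP IH) /=; lia.
Qed.

Lemma f_pos p : G2 p -> all (fun x => 0 < x) (f p).
Proof. by move=> G2p; apply: sub_all (f_bounds _ G2p) => x /andP[]. Qed.

Lemma f_ltn a p : G2 p -> 0 < a -> all (fun x => x < a) p -> all (fun x => x < a) (f p).
Proof.
move=> G2p a_gt0 p_lt_a; have p_head := all_head (fun x => x < a) _ a_gt0 p_lt_a.
by apply: sub_all (f_bounds _ G2p) => x /andP[_ /leq_ltn_trans]; apply.
Qed.

Lemma size_f p : G2 p -> size (f p) = nparts p.
Proof.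
move: p; apply: G2_ind => [|a p _ a_gt0 p_lt_a IH|b p G2p b_ge2 p_le_b IH] //.
  by rewrite (perm_size (perm_f_cons_max _ _ a_gt0 p_lt_a)) nparts_cons_max // -IH.
have p_lt_b := all_ltn_pair p_le_b.
have p_head : (head 0 p).+2 <= b by exact: (all_head (fun x => x.+2 <= b) _ b_ge2 p_le_b).
rewrite (perm_size (perm_f_cons_pair _ _ _ p_lt_b)) ?size_cat ?size_nseq ?size_map; last lia.
by rewrite nparts_cons_pair //; have := nparts_le_head _ G2p; lia.
Qed.

Lemma size_f_le_head p : G2 p -> size (f p) <= head 0 p.
Proof. by move=> G2p; rewrite size_f // nparts_le_head. Qed.

Lemma size_f_pair_le b p : G2 p -> 2 <= b -> all (fun x => x.+2 <= b) p -> (size (f p)).+2 <= b.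
Proof.
move=> G2p b_ge2 p_le_b; apply: leq_trans (all_head (fun x => x.+2 <= b) _ b_ge2 p_le_b).
by rewrite !ltnS size_f_le_head.
Qed.

Lemma f_cons_max a p : G2 p -> 0 < a -> all (fun x => x < a) p -> f (a :: p) = a :: f p.
Proof.
move=> G2p a_gt0 p_lt_a.
apply: (sorted_eq geq_trans geq_anti (sorted_f _)); last exact: perm_f_cons_max.
rewrite /= (path_sortedE geq_trans) sorted_f andbT.
by apply: sub_all (f_ltn _ _ G2p a_gt0 p_lt_a) => x /ltnW.
Qed.

Lemma sorted_map_addn2_nseq s c : sorted geq s -> sorted geq (map (addn 2) s ++ nseq c 2).
Proof.
move=> s_sorted; rewrite sorted_pairwise ?pairwise_cat; last exact: geq_trans.
apply/and3P; split.
- by apply/allrelP => _ y /mapP[x _ ->]; rewrite mem_nseq => /andP[_ /eqP ->]; exact: leq_addr.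
- rewrite -sorted_pairwise; last exact: geq_trans.
  by apply: homo_sorted s_sorted => x y /=; rewrite leq_add2l.
- by elim: c => //= c ->; rewrite andbT; apply/allP => x; rewrite mem_nseq => /andP[_ /eqP ->].
Qed.

Lemma f_cons_pair b p : G2 p -> 2 <= b -> all (fun x => x.+2 <= b) p ->
  f (b :: b :: p) = map (addn 2) (f p) ++ nseq (b - size (f p)) 2.
Proof.
move=> G2p b_ge2 p_le_b.
apply: (sorted_eq geq_trans geq_anti (sorted_f _) (sorted_map_addn2_nseq _ _ (sorted_f _))).
have b_gt0 : 0 < b by lia.
apply: perm_trans (perm_f_cons_pair _ _ b_gt0 (all_ltn_pair p_le_b)) _.
by rewrite perm_catC size_f.
Qed.

Lemma size_f_cons_pair b p : G2 p -> 2 <= b -> all (fun x => x.+2 <= b) p ->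
  size (f (b :: b :: p)) = b.
Proof.
move=> G2p b_ge2 p_le_b; rewrite f_cons_pair // size_cat size_map size_nseq.
by have := size_f_pair_le _ _ G2p b_ge2 p_le_b; lia.
Qed.

Lemma sumn_map_addn k s : sumn (map (addn k) s) = k * size s + sumn s.
Proof. by elim: s => [|x s IH] /=; rewrite ?muln0 // IH mulnS; lia. Qed.

Lemma sumn_f p : G2 p -> sumn (f p) = sumn p.
Proof.
move: p; apply: G2_ind => [|a p G2ap a_gt0 p_lt_a IH|b p G2p b_ge2 p_le_b IH].
- by rewrite f_nil.
- have G2p := G2_behead G2ap.
  by rewrite f_cons_max //= IH.
- rewrite f_cons_pair // sumn_cat sumn_map_addn sumn_nseq IH /=.
  by have := size_f_pair_le _ _ G2p b_ge2 p_le_b; lia.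
Qed.

(** * The class [A_2] *)

Definition rep_above (l : seq nat) (j : nat) : Prop := exists2 x, j < x & 2 <= mult x l.

Lemma lt_R1 l j : j < R1 l <-> rep_above l j.
Proof.
have -> : (j < R1 l) = has (fun x => j < x) [seq x <- l | 2 <= mult x l].
  by rewrite /R1; elim: (filter _ _) => //= x s <-; rewrite leq_max.
split => [/hasP[x] | [x j_lt_x rep_x]]; first by rewrite mem_filter => /andP[rep_x _]; exists x.
by apply/hasP; exists x; rewrite // mem_filter rep_x -mult_gt0 (leq_trans _ rep_x).
Qed.

Definition A2_mult (l : seq nat) : Prop :=
  [/\ forall j, odd j -> mult j l <= 1,
      forall j, odd j -> rep_above l j -> mult j l = 0 &
      forall j, ~~ odd j -> 0 < j -> rep_above l j -> 2 <= mult j l].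

Lemma A2E l : A2 l <-> is_partition l /\ A2_mult l.
Proof.
split=> [[part_l [m_odd [odd_0 even_2]]] | [part_l [m_odd odd_0 even_2]]].
  split=> //; split=> // j j_odd.
    by move/lt_R1; exact: odd_0.
  by move=> j_gt0 /lt_R1; exact: even_2.
split=> //; split=> //; split=> j j_odd.
  by move/lt_R1; exact: odd_0.
by move=> j_gt0 /lt_R1; exact: even_2.
Qed.

Lemma A2_mult_nil : A2_mult [::].
Proof. by split=> j _ => [|[x _]|_ [x _]]. Qed.

Lemma A2_mult_cons_max a l : all (fun x => x < a) l -> A2_mult l -> A2_mult (a :: l).
Proof.
move=> l_lt_a [m_odd odd_0 even_2].
have mult_ge j : a <= j -> mult j l = 0 by apply: mult_all_ltn.
have rep_tail j : rep_above (a :: l) j -> rep_above l j.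
  move=> [x j_lt_x]; rewrite mult_cons; case: eqP => [<-|_]; last by exists x.
  by rewrite mult_ge.
split=> j j_odd; rewrite ?mult_cons.
- by case: eqP => [<-|_]; [rewrite mult_ge | exact: m_odd].
- move=> /rep_tail rep_j; case: eqP => [a_eq|_]; last exact: odd_0.
  by case: rep_j => x j_lt_x; rewrite mult_ge //; lia.
- by move=> j_gt0 /rep_tail rep_j; apply: leq_trans (even_2 _ _ _ _) (leq_addl _ _).
Qed.

Lemma mult_map_addn2_nseq j s c : all (fun x => 0 < x) s ->
  mult j (map (addn 2) s ++ nseq c 2) = if j == 2 then c else if 2 < j then mult (j - 2) s else 0.
Proof.
move=> s_pos; rewrite /mult count_cat count_map count_nseq /=.
have count_0 k : k <= 2 -> count (preim (addn 2) (pred1 k)) s = 0.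
  move=> k_le2; apply/eqP; rewrite -leqn0 leqNgt -has_count.
  by apply/hasP => -[x x_in /= /eqP]; have := allP s_pos x x_in; lia.
case: (ltngtP j 2) => [j_lt2 | j_gt2 | ->].
- by rewrite count_0 // ltnW.
- by rewrite [_ * c]/= addn0; apply: eq_count => x /=; apply/eqP/eqP; lia.
- by rewrite count_0 //= mul1n.
Qed.

Lemma A2_mult_pair s c :
  2 <= c -> all (fun x => 0 < x) s -> A2_mult s -> A2_mult (map (addn 2) s ++ nseq c 2).
Proof.
move=> c_ge2 s_pos [m_odd odd_0 even_2]; set l := _ ++ _.
have mult_l j : mult j l = _ := mult_map_addn2_nseq j _ c s_pos.
have rep_down j : 2 < j -> rep_above l j -> rep_above s (j - 2).
  move=> j_gt2 [x j_lt_x]; rewrite mult_l; case: eqP => [x_eq2|_]; first lia.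
  by case: ifP => // x_gt2 rep_x; exists (x - 2); first lia.
have odd_sub2 j : 2 <= j -> odd (j - 2) = odd j by move=> j_ge2; rewrite oddB // addbF.
split=> j j_odd; rewrite mult_l.
- case: eqP => [j_eq2|_]; first by rewrite j_eq2 in j_odd.
  by case: ifP => // j_gt2; apply: m_odd; rewrite odd_sub2 // ltnW.
- move=> rep_j; case: eqP => [j_eq2|_]; first by rewrite j_eq2 in j_odd.
  case: ifP => // j_gt2; apply: odd_0 (rep_down _ j_gt2 rep_j).
  by rewrite odd_sub2 // ltnW.
- move=> j_gt0 rep_j; case: eqP => // j_neq2.
  have j_gt2 : 2 < j by move: j_odd j_gt0 j_neq2; case: j {rep_j} => [|[|[|j]]].
  rewrite j_gt2; apply: even_2 (rep_down _ j_gt2 rep_j); last lia.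
  by rewrite odd_sub2 // ltnW.
Qed.

Lemma A2_f p : G2 p -> A2 (f p).
Proof.
move=> G2p; apply/A2E; split; first by rewrite /is_partition sorted_f f_pos.
move: p G2p; apply: G2_ind => [|a p G2ap a_gt0 p_lt_a IH|b p G2p b_ge2 p_le_b IH].
- by rewrite f_nil; exact: A2_mult_nil.
- have G2p := G2_behead G2ap.
  by rewrite f_cons_max //; apply: A2_mult_cons_max; rewrite ?f_ltn.
- rewrite f_cons_pair //; apply: A2_mult_pair; rewrite ?f_pos //.
  by have := size_f_pair_le _ _ G2p b_ge2 p_le_b; lia.
Qed.

Lemma nuniq_mult l : ~~ uniq l -> exists x, 2 <= mult x l.
Proof.
elim: l => // y l IH; rewrite cons_uniq negb_and negbK.
have [y_in _ | _ /IH[x rep_x]] := boolP (y \in l).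
  by exists y; rewrite mult_cons eqxx; move: y_in; rewrite -mult_gt0.
by exists x; rewrite mult_cons; apply: leq_trans rep_x (leq_addl _ _).
Qed.

Lemma count_leqS m s :
  count (fun x => x <= m.+1) s = count (fun x => x <= m) s + mult m.+1 s.
Proof.
elim: s => // y s IH; rewrite mult_cons /= IH.
case: (ltngtP y m.+1) => [y_lt | y_gt | ->]; last by rewrite ltnn /=; lia.
  by rewrite -ltnS y_lt /=; lia.
by rewrite leqNgt ltnW //=; lia.
Qed.

Lemma count_leq_double n l : (forall j, 0 < j <= n.*2 -> ~~ odd j -> 2 <= mult j l) ->
  n.*2 <= count (fun x => x <= n.*2) l.
Proof.
elim: n => // n IH rep_even; rewrite doubleS !count_leqS.
have IH' : n.*2 <= count (fun x => x <= n.*2) l.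
  by apply: IH => j j_range; apply: rep_even; rewrite doubleS; lia.
have rep_top : 2 <= mult n.*2.+2 l.
  by apply: rep_even; rewrite /= ?odd_double // doubleS; lia.
lia.
Qed.

Lemma A2_mult_size a l : A2_mult l -> 2 <= mult a l -> a <= size l.
Proof.
move=> [m_odd _ even_2] rep_a.
have a_even : ~~ odd a by apply: contraTN rep_a => /m_odd; lia.
have a_half : (a./2).*2 = a by rewrite -[RHS](odd_double_half a) (negbTE a_even).
rewrite -a_half; apply: leq_trans (count_size _ l); apply: count_leq_double.
rewrite a_half => j /andP[j_gt0 j_le_a] j_even.
case: (ltngtP j a) j_le_a => // [j_lt_a | ->] _; last exact: rep_a.
by apply: even_2 => //; exists a.
Qed.

Lemma A2_mult_behead a l : all (fun x => x < a) l -> A2_mult (a :: l) -> A2_mult l.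
Proof.
move=> l_lt_a [m_odd odd_0 even_2].
have rep_cons j : rep_above l j -> rep_above (a :: l) j.
  by move=> [x j_lt_x rep_x]; exists x; rewrite // mult_cons (leq_trans rep_x) ?leq_addl.
split=> j j_odd.
- by have := m_odd j j_odd; rewrite mult_cons; lia.
- by move=> /rep_cons /(odd_0 j j_odd); rewrite mult_cons; lia.
move=> j_gt0 rep_j; have := even_2 j j_odd j_gt0 (rep_cons _ rep_j).
rewrite mult_cons; case: eqP => [a_eq | _] //; case: rep_j => x j_lt_x.
by rewrite (mult_all_ltn x _ _ l_lt_a) //; lia.
Qed.

Lemma A2_not_uniq l : is_partition l -> A2_mult l -> ~~ uniq l ->
  2 <= mult 2 l /\ all (fun y => 1 < y) l.
Proof.
move=> /andP[_ l_pos] [m_odd odd_0 even_2] /nuniq_mult[x rep_x].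
have x_in : x \in l by rewrite -mult_gt0; lia.
have x_even : ~~ odd x by apply: contraTN rep_x => /m_odd; lia.
have x_ge2 : 2 <= x by move: (allP l_pos x x_in) x_even; case: (x) => [|[]].
have no1 : mult 1 l = 0 by apply: odd_0 => //; exists x.
split.
  have [x_eq2 | x_neq2] := eqVneq x 2; first by rewrite x_eq2 in rep_x.
  by apply: even_2 => //; exists x => //; lia.
apply/allP => y y_in; have /= y_gt0 := allP l_pos y y_in.
have : y != 1 by apply: contraTneq y_in => ->; rewrite -mult_gt0 no1.
by rewrite /=; lia.
Qed.

Definition down (l : seq nat) : seq nat := [seq y - 2 | y <- l & 2 < y].

Lemma mult_down j l : mult j (down l) = if 0 < j then mult j.+2 l else 0.
Proof.
rewrite /mult /down count_map count_filter; case: ifP => j_gt0.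
  by apply: eq_count => y /=; apply/andP/eqP => [[/eqP <- y_gt2] | ->]; lia.
apply/eqP; rewrite -leqn0 leqNgt -has_count.
by apply/hasP => -[y _ /= /andP[/eqP y_eq y_gt2]]; lia.
Qed.

Lemma part_down l : is_partition l -> is_partition (down l).
Proof.
move=> /andP[l_sorted _]; apply/andP; split.
  rewrite /down sorted_map; apply: sub_sorted (sorted_filter geq_trans _ l_sorted).
  by move=> x y /=; apply: leq_sub2r.
by rewrite /down all_map; apply/allP => y; rewrite mem_filter => /andP[y_gt2 _] /=; lia.
Qed.

Lemma A2_mult_down l : A2_mult l -> A2_mult (down l).
Proof.
move=> [m_odd odd_0 even_2].
have rep_up j : rep_above (down l) j -> rep_above l j.+2.
  by move=> [x j_lt_x]; rewrite mult_down; case: ifP => // x_gt0 rep_x; exists x.+2.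
have odd_add2 j : odd j.+2 = odd j by rewrite /= negbK.
split=> j j_odd; rewrite mult_down.
- by case: ifP => // _; apply: m_odd; rewrite odd_add2.
- by move=> /rep_up rep_j; case: ifP => // _; apply: odd_0; rewrite ?odd_add2.
- by move=> j_gt0 /rep_up rep_j; rewrite j_gt0; apply: even_2; rewrite ?odd_add2.
Qed.

Lemma down_map_addn2 s c : all (fun x => 0 < x) s -> down (map (addn 2) s ++ nseq c 2) = s.
Proof.
move=> s_pos; rewrite /down filter_cat filter_nseq /= cats0 filter_map.
by rewrite (all_filterP s_pos) (mapK (addKn 2)).
Qed.

Lemma down_cons y l : down (y :: l) = if 2 < y then (y - 2) :: down l else down l.
Proof. by rewrite /down /=; case: ifP. Qed.

Lemma map_addn2_down l : sorted geq l -> all (fun y => 1 < y) l ->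
  map (addn 2) (down l) ++ nseq (mult 2 l) 2 = l.
Proof.
elim: l => // y l IH y_l_sorted /andP[y_gt1 l_gt1].
rewrite down_cons mult_cons; case: (ltngtP 2 y) => [y_gt2 | y_lt2 | y_eq2].
- by rewrite /= add0n IH ?(path_sorted y_l_sorted) // subnKC // ltnW.
- by move: y_gt1; rewrite ltnNge -ltnS y_lt2.
subst y; have l_2 : all (pred1 2) l.
  move: y_l_sorted; rewrite /= (path_sortedE geq_trans) => /andP[/allP l_le2 _].
  by apply/allP => x x_in; have := l_le2 x x_in; have := allP l_gt1 x x_in => /=; lia.
by rewrite (all_pred1P _ _ l_2) /down filter_nseq /= /mult count_nseq /= mul1n.
Qed.

(** * Reading off the first step of the recursion from [f p] *)

(* For nonempty [p] in [G_2], the largest part of [p] is simple iff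
   [simple_top (f p)]. *)
Definition simple_top (l : seq nat) : bool := uniq l || (size l < head 0 l).

Lemma simple_top_f_cons_max a p :
  G2 (a :: p) -> 0 < a -> all (fun x => x < a) p -> simple_top (f (a :: p)).
Proof.
move=> G2ap; have G2p := G2_behead G2ap; move: p G2p a G2ap.
apply: G2_ind => [|c p G2cp c_gt0 p_lt_c IH|c p G2p c_ge2 p_le_c _] a G2a a_gt0 /=.
- by rewrite f_cons_max //; exact: G2_nil.
- move=> cp_lt_a; have /andP[c_lt_a p_lt_a] := cp_lt_a; have G2p := G2_behead G2cp.
  rewrite f_cons_max ?(f_cons_max _ _ G2p) //=.
  have := IH c G2cp c_gt0 p_lt_c; rewrite f_cons_max // /simple_top /=.
  case/orP => [uniq_cp | small]; last by rewrite (leq_ltn_trans small c_lt_a) orbT.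
  rewrite uniq_cp andbT all_ltn_notin //= c_lt_a.
  by apply: f_ltn (sub_all _ p_lt_c) => // x /ltn_trans; apply.
- move=> /and3P[c_lt_a _ p_lt_a].
  have c_neq : c.+1 != a.
    apply/eqP => a_eq; have [_ [_ /(_ c (ltnW c_ge2))]] := G2a.
    rewrite !mult_cons -a_eq !eqxx /= (mult_all_ltn _ _ _ (all_ltn_pair p_le_c)) //; lia.
  have G2ccp := G2_cons_pair _ _ G2p c_ge2 p_le_c.
  rewrite f_cons_max //; last by rewrite /= c_lt_a.
  apply/orP; right.
  by change ((size (f [:: c, c & p])).+1 < a); rewrite size_f_cons_pair //; lia.
Qed.

Lemma not_simple_top_f_cons_pair b p : G2 p -> 2 <= b -> all (fun x => x.+2 <= b) p ->
  ~~ simple_top (f (b :: b :: p)).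
Proof.
move=> G2p b_ge2 p_le_b; rewrite /simple_top negb_or -leqNgt size_f_cons_pair //.
have size_le := size_f_pair_le _ _ G2p b_ge2 p_le_b.
apply/andP; split.
  rewrite f_cons_pair // cat_uniq.
  have -> : b - size (f p) = (b - size (f p) - 2).+2 by lia.
  by rewrite /= !andbF.
apply: (all_head (fun x => x <= b) (f (b :: b :: p))) => //; apply/allP => x.
rewrite f_cons_pair // mem_cat mem_nseq => /orP[/mapP[y y_in ->] | /andP[_ /eqP ->]] //.
have := allP (f_bounds _ G2p) y y_in; have := all_head (fun x => x.+2 <= b) _ b_ge2 p_le_b.
rewrite /=; lia.
Qed.

Lemma G2_cons_max_of_f a p : G2 p -> 0 < a -> all (fun x => x < a) (f p) ->
  (~~ uniq (f p) -> (size (f p)).+1 < a) -> G2 (a :: p) /\ f (a :: p) = a :: f p.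
Proof.
move=> G2p a_gt0 fp_lt_a small.
suff p_lt_a : all (fun x => x < a) p /\ mult a.-1 p <= 1.
  by case: p_lt_a => p_lt_a mult_pred; rewrite f_cons_max //; split=> //; apply: G2_cons_max.
case/G2P: G2p fp_lt_a small => [|c q G2cq c_gt0 q_lt_c|c q G2q c_ge2 q_le_c] //.
  have G2q := G2_behead G2cq; rewrite f_cons_max // => /andP[c_lt_a _] _.
  split; first by rewrite /= c_lt_a; apply: sub_all q_lt_c => x /ltn_trans; apply.
  by rewrite mult_cons (mult_all_ltn _ _ _ q_lt_c); lia.
have := not_simple_top_f_cons_pair _ _ G2q c_ge2 q_le_c; rewrite negb_or => /andP[nuniq _] _.
move=> /(_ nuniq); rewrite size_f_cons_pair // => c_lt.
have ccq_lt : all (fun x => x < a.-1) (c :: c :: q).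
  by rewrite /= !(ltn_predRL, c_lt) //=; apply/allP => x /(allP q_le_c) /=; lia.
rewrite (mult_all_ltn _ _ _ ccq_lt) //; split=> //.
by apply: sub_all ccq_lt => x /=; lia.
Qed.

Lemma G2_cons_pair_of_f b p : G2 p -> 2 <= b -> all (fun x => x.+2 <= b) (f p) ->
  (size (f p)).+2 <= b ->
  G2 (b :: b :: p) /\ f (b :: b :: p) = map (addn 2) (f p) ++ nseq (b - size (f p)) 2.
Proof.
move=> G2p b_ge2 fp_le_b size_le.
suff p_le_b : all (fun x => x.+2 <= b) p by rewrite f_cons_pair //; split=> //; apply: G2_cons_pair.
case/G2P: G2p fp_le_b size_le => [|c q G2cq c_gt0 q_lt_c|c q G2q c_ge2 q_le_c] //.
  have G2q := G2_behead G2cq; rewrite f_cons_max // => /andP[c_le_b _] _.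
  by rewrite /= c_le_b; apply: sub_all q_lt_c => x /=; lia.
move=> _; rewrite size_f_cons_pair // => c_le_b.
by rewrite /= c_le_b; apply: sub_all q_le_c => x /=; lia.
Qed.

Lemma down_f_cons_pair b p : G2 p -> 2 <= b -> all (fun x => x.+2 <= b) p ->
  down (f (b :: b :: p)) = f p.
Proof. by move=> G2p b_ge2 p_le_b; rewrite f_cons_pair // down_map_addn2 // f_pos. Qed.

Lemma f_inj p q : G2 p -> G2 q -> f p = f q -> p = q.
Proof.
move=> G2p; move: p G2p q.
apply: G2_ind => [|a p G2ap a_gt0 p_lt_a IH|b p G2p b_ge2 p_le_b IH] q';
  case/G2P => [|c q G2cq c_gt0 q_lt_c|c q G2q c_ge2 q_le_c] //.
- by have G2q := G2_behead G2cq; rewrite f_nil f_cons_max.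
- move/(congr1 simple_top).
  by rewrite f_nil (negbTE (not_simple_top_f_cons_pair _ _ G2q c_ge2 q_le_c)).
- by have G2p := G2_behead G2ap; rewrite f_nil f_cons_max.
- have G2p := G2_behead G2ap; have G2q := G2_behead G2cq.
  by rewrite !f_cons_max // => -[<- /(IH _ G2q) ->].
- move/(congr1 simple_top).
  by rewrite simple_top_f_cons_max // (negbTE (not_simple_top_f_cons_pair _ _ G2q c_ge2 q_le_c)).
- move/(congr1 simple_top).
  by rewrite f_nil (negbTE (not_simple_top_f_cons_pair _ _ G2p b_ge2 p_le_b)).
- move/(congr1 simple_top).
  rewrite (simple_top_f_cons_max c q) //.
  by rewrite (negbTE (not_simple_top_f_cons_pair _ _ G2p b_ge2 p_le_b)).
- move=> f_eq; have b_eq_c : b = c.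
    by rewrite -(size_f_cons_pair _ _ G2p b_ge2 p_le_b) f_eq size_f_cons_pair.
  subst c; have fp_eq : f p = f q.
    by rewrite -(down_f_cons_pair _ _ G2p b_ge2 p_le_b) f_eq down_f_cons_pair.
  by rewrite (IH _ G2q fp_eq).
Qed.

Lemma A2_behead_simple_top a l : A2 (a :: l) -> simple_top (a :: l) ->
  all (fun x => x < a) l /\ A2 l.
Proof.
move=> /A2E[part_al A2m_al] top; move: (part_al); rewrite part_cons => /and3P[l_le_a _ part_l].
have a_notin_l : a \notin l.
  apply: contraTN top => a_in_l; rewrite /simple_top /= a_in_l /= -leqNgt.
  by apply: A2_mult_size _ _ A2m_al _; rewrite mult_cons eqxx -mult_gt0 in a_in_l *.
have l_lt_a : all (fun x => x < a) l.
  apply/allP => x x_in; rewrite ltn_neqAle (allP l_le_a) // andbT.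
  by apply: contraNneq a_notin_l => <-.
by split=> //; apply/A2E; split=> //; exact: A2_mult_behead _ _ l_lt_a A2m_al.
Qed.

Lemma A2_down_not_simple_top l : A2 l -> ~~ simple_top l ->
  [/\ A2 (down l), 2 <= mult 2 l & map (addn 2) (down l) ++ nseq (mult 2 l) 2 = l].
Proof.
move=> /A2E[part_l A2m_l]; rewrite /simple_top negb_or => /andP[nuniq _].
have [mult2 l_gt1] := A2_not_uniq _ part_l A2m_l nuniq.
split=> //; last exact: map_addn2_down (proj1 (andP part_l)) l_gt1.
by apply/A2E; split; [exact: part_down | exact: A2_mult_down].
Qed.

Lemma f_surj l : A2 l -> exists p, G2 p /\ f p = l.
Proof.
have [n] := ubnP (size l); elim: n l => // n IH [|a l] size_l A2l.
  by exists [::]; split; [exact: G2_nil | exact: f_nil].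
have [top | not_top] := boolP (simple_top (a :: l)).
  have [l_lt_a A2l'] := A2_behead_simple_top _ _ A2l top.
  have [p [G2p fp]] := IH l size_l A2l'; subst l.
  have a_gt0 : 0 < a by move: A2l => /A2E[]; rewrite part_cons => /and3P[].
  have small : ~~ uniq (f p) -> (size (f p)).+1 < a.
    by move=> nuniq; move: top; rewrite /simple_top /= (negbTE nuniq) andbF.
  have [G2ap fap] := G2_cons_max_of_f _ _ G2p a_gt0 l_lt_a small.
  by exists (a :: p).
move: (a :: l) A2l not_top size_l => L A2L not_top size_L.
have [A2d mult2 L_eq] := A2_down_not_simple_top _ A2L not_top.
have size_L_eq : size (down L) + mult 2 L = size L.
  by rewrite -[in RHS]L_eq size_cat size_map size_nseq.
have size_down : size (down L) < n by lia.
have [p [G2p fp]] := IH (down L) size_down A2d.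
have head_le : head 0 L <= size L.
  by move: not_top; rewrite /simple_top negb_or -leqNgt => /andP[].
have fp_le : all (fun x => x.+2 <= size L) (f p).
  move: A2L => /A2E[/part_head L_le_head _].
  apply/allP => x; rewrite fp /down => /mapP[y]; rewrite mem_filter => /andP[y_gt2 y_in] ->.
  by have := allP L_le_head y y_in; rewrite /=; lia.
have b_ge2 : 2 <= size L by lia.
have size_le : (size (f p)).+2 <= size L by rewrite fp; lia.
have [G2p' fp'] := G2_cons_pair_of_f _ _ G2p b_ge2 fp_le size_le.
exists [:: size L, size L & p]; split=> //; rewrite fp' fp.
by have -> : size L - size (down L) = mult 2 L by lia.
Qed.

Theorem theorem4 :
  (forall p, G2 p -> A2 (f p)) /\
  (forall p q, G2 p -> G2 q -> f p = f q -> p = q) /\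
  (forall l, A2 l -> exists p, G2 p /\ f p = l) /\
  (forall p, G2 p -> sumn (f p) = sumn p).
Proof.
split; first exact: A2_f.
split; first exact: f_inj.
split; first exact: f_surj.
exact: sumn_f.
Qed.
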